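(* Let $\mathcal C$ be a category, $I:\mathcal B\to\mathcal C$ the inclusion of a full subcategory with a left adjoint $S:\mathcal C\to\mathcal B$ (unit $\alpha:1\to IS$, counit $SI\cong1$), and $J:\mathcal D\to\mathcal C$ the inclusion of a full subcategory with a right adjoint $T:\mathcal C\to\mathcal D$ (unit $1\cong TJ$, counit $\epsilon:JT\to1$), and suppose $IS\epsilon:ISJT\to IS$ and $JT\alpha:JT\to JTIS$ are isomorphisms. Then the functors $JTI:\mathcal B\to\mathcal C$ and $ISJ:\mathcal D\to\mathcal C$ are full and faithful. *)

Set Implicit Arguments.
Unset Strict Implicit.

Record Category := {
  Obj :> Type;
  Hom : Obj -> Obj -> Type;
  cid : forall a, Hom a a;
  comp : forall x y z, Hom y z -> Hom x y -> Hom x z;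
  comp_id_l : forall x y (f : Hom x y), comp (cid y) f = f;
  comp_id_r : forall x y (f : Hom x y), comp f (cid x) = f;
  comp_assoc : forall x y z w (f : Hom x y) (g : Hom y z) (h : Hom z w),
      comp h (comp g f) = comp (comp h g) f
}.
Arguments Hom {c} _ _.
Arguments cid {c} a.
Arguments comp {c x y z} _ _.

Record Functor (C D : Category) := {
  fobj :> C -> D;
  fmap : forall a b, Hom a b -> Hom (fobj a) (fobj b);
  fmap_id : forall a, fmap (cid a) = cid (fobj a);
  fmap_comp : forall a b c (f : Hom a b) (g : Hom b c),
      fmap (comp g f) = comp (fmap g) (fmap f)
}.
Arguments fmap {C D} f0 {a b} _.

Definition IdFunctor (C : Category) : Functor C C.
Proof.
  refine {| fobj := fun a => a; fmap := fun a b f => f |}; reflexivity.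
Defined.

Definition CompFunctor (C D E : Category) (G : Functor D E) (F : Functor C D)
  : Functor C E.
Proof.
  refine {| fobj := fun a => G (F a); fmap := fun a b f => fmap G (fmap F f) |}.
  - intros a. rewrite !fmap_id. reflexivity.
  - intros a b c f g. rewrite !fmap_comp. reflexivity.
Defined.

Record NatTrans (C D : Category) (F G : Functor C D) := {
  ntc :> forall a, Hom (F a) (G a);
  naturality : forall a b (f : Hom a b),
      comp (fmap G f) (ntc a) = comp (ntc b) (fmap F f)
}.

Definition is_iso (C : Category) (a b : C) (f : Hom a b) : Prop :=
  exists g : Hom b a, comp g f = cid a /\ comp f g = cid b.

Definition Adjunction (C D : Category) (F : Functor C D) (G : Functor D C)
  (eta : NatTrans (IdFunctor C) (CompFunctor G F))
  (eps : NatTrans (CompFunctor F G) (IdFunctor D)) : Prop :=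
  (forall a : C, comp (eps (F a)) (fmap F (eta a)) = cid (F a)) /\
  (forall b : D, comp (fmap G (eps b)) (eta (G b)) = cid (G b)).

Definition FullSub (C : Category) (P : C -> Prop) : Category.
Proof.
  refine {| Obj := { x : C | P x };
            Hom := fun a b => Hom (proj1_sig a) (proj1_sig b);
            cid := fun a => cid (proj1_sig a);
            comp := fun a b c g f => comp g f |}.
  - intros; apply comp_id_l.
  - intros; apply comp_id_r.
  - intros; apply comp_assoc.
Defined.

Definition Incl (C : Category) (P : C -> Prop) : Functor (FullSub P) C.
Proof.
  refine {| fobj := fun a : FullSub P => proj1_sig a; fmap := fun a b f => f |};
    reflexivity.
Defined.

Definition full (C D : Category) (F : Functor C D) : Prop :=
  forall a b (g : Hom (F a) (F b)), exists f : Hom a b, fmap F f = g.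

Definition faithful (C D : Category) (F : Functor C D) : Prop :=
  forall a b (f f' : Hom a b), fmap F f = fmap F f' -> f = f'.

Arguments Adjunction {C D} F G eta eps.

From Corelib Require Import ssreflect.

Set Implicit Arguments.
Unset Strict Implicit.

(* Objects of a reflective subcategory B are local: if [IS u] is invertible,
   precomposition with [u : x -> y] is a bijection [Hom(y, b) -> Hom(x, b)] for
   every b in B.  Dually, if [JT u] is invertible, postcomposition with [u] is a
   bijection [Hom(d, x) -> Hom(d, y)] for every d in the coreflective
   subcategory D.  For a, b in B, naturality of the counit gives
   [eps b ∘ JT f = f ∘ eps a]; since [eps b] is cancellable on maps out of D and
   precomposition with [eps a] is bijective ([IS eps] being invertible),
   [f |-> JT f] is bijective.  The argument for [ISJ] is dual, with the unit
   [alpha] and the invertibility of [JT alpha]. *)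

Section Reflection.

Variables (C : Category) (PB : C -> Prop).
Variable S : Functor C (FullSub PB).
Variable alpha : NatTrans (IdFunctor C) (CompFunctor (Incl PB) S).
Variable beta : NatTrans (CompFunctor S (Incl PB)) (IdFunctor (FullSub PB)).
Hypothesis adj : Adjunction S (Incl PB) alpha beta.

Local Notation "g ∘ f" := (@comp C _ _ _ g f) (at level 40, left associativity).

Lemma reflection_unit_natural x y (f : Hom x y) :
  fmap S f ∘ alpha x = alpha y ∘ f.
Proof. exact (naturality alpha f). Qed.

Lemma reflection_counit_natural (b b' : FullSub PB)
  (g : Hom (proj1_sig b) (proj1_sig b')) :
  g ∘ beta b = beta b' ∘ fmap S g.
Proof. exact (naturality beta g). Qed.

Lemma reflection_factor x (b : FullSub PB) (k : Hom x (proj1_sig b)) :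
  beta b ∘ fmap S k ∘ alpha x = k.
Proof.
  case: adj => _ tri.
  by rewrite -comp_assoc reflection_unit_natural comp_assoc tri comp_id_l.
Qed.

Lemma reflection_unit_epi x (b : FullSub PB)
  (h h' : Hom (proj1_sig (S x)) (proj1_sig b)) :
  h ∘ alpha x = h' ∘ alpha x -> h = h'.
Proof.
  case: adj => tri _.
  have triC : beta (S x) ∘ fmap S (alpha x) = cid _ := tri x.
  have expand (g : Hom (proj1_sig (S x)) (proj1_sig b)) :
    g = beta b ∘ fmap S (g ∘ alpha x).
  { rewrite (fmap_comp S (alpha x) g) comp_assoc -reflection_counit_natural.
    by rewrite -comp_assoc triC comp_id_r. }
  by move=> E; rewrite (expand h) (expand h') E.
Qed.

Section Local.

Variables (x y : C) (u : Hom x y).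
Hypothesis hu : is_iso (fmap (Incl PB) (fmap S u)).
Variable b : FullSub PB.

Lemma reflection_local_extend (h : Hom x (proj1_sig b)) :
  exists f : Hom y (proj1_sig b), f ∘ u = h.
Proof.
  case: hu => i [iSu _].
  exists (beta b ∘ fmap S h ∘ i ∘ alpha y).
  rewrite -[_ ∘ u]comp_assoc -reflection_unit_natural comp_assoc.
  by rewrite -[_ ∘ i ∘ _]comp_assoc iSu comp_id_r reflection_factor.
Qed.

Lemma reflection_local_cancel (f f' : Hom y (proj1_sig b)) :
  f ∘ u = f' ∘ u -> f = f'.
Proof.
  case: hu => i [_ Sui] E.
  have ES : fmap S f = fmap S f'.
  { move: (f_equal (fun v => fmap S v ∘ i) E).
    by rewrite !fmap_comp -!comp_assoc Sui !comp_id_r. }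
  by rewrite -(reflection_factor f) -(reflection_factor f') ES.
Qed.

End Local.

End Reflection.

Section Coreflection.

Variables (C : Category) (PD : C -> Prop).
Variable T : Functor C (FullSub PD).
Variable gamma : NatTrans (IdFunctor (FullSub PD)) (CompFunctor T (Incl PD)).
Variable eps : NatTrans (CompFunctor (Incl PD) T) (IdFunctor C).
Hypothesis adj : Adjunction (Incl PD) T gamma eps.

Local Notation "g ∘ f" := (@comp C _ _ _ g f) (at level 40, left associativity).

Lemma coreflection_counit_natural x y (f : Hom x y) :
  f ∘ eps x = eps y ∘ fmap T f.
Proof. exact (naturality eps f). Qed.

Lemma coreflection_unit_natural (d d' : FullSub PD)
  (g : Hom (proj1_sig d) (proj1_sig d')) :
  fmap T g ∘ gamma d = gamma d' ∘ g.
Proof. exact (naturality gamma g). Qed.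

Lemma coreflection_factor (d : FullSub PD) y (k : Hom (proj1_sig d) y) :
  eps y ∘ (fmap T k ∘ gamma d) = k.
Proof.
  case: adj => tri _.
  by rewrite comp_assoc -coreflection_counit_natural -comp_assoc tri comp_id_r.
Qed.

Lemma coreflection_counit_mono (d : FullSub PD) y
  (h h' : Hom (proj1_sig d) (proj1_sig (T y))) :
  eps y ∘ h = eps y ∘ h' -> h = h'.
Proof.
  case: adj => _ tri.
  have triC : fmap T (eps y) ∘ gamma (T y) = cid _ := tri y.
  have expand (g : Hom (proj1_sig d) (proj1_sig (T y))) :
    g = fmap T (eps y ∘ g) ∘ gamma d.
  { rewrite (fmap_comp T g (eps y)) -comp_assoc coreflection_unit_natural.
    by rewrite comp_assoc triC comp_id_l. }
  by move=> E; rewrite (expand h) (expand h') E.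
Qed.

Section Colocal.

Variables (x y : C) (u : Hom x y).
Hypothesis hu : is_iso (fmap (Incl PD) (fmap T u)).
Variable d : FullSub PD.

Lemma coreflection_local_lift (h : Hom (proj1_sig d) y) :
  exists f : Hom (proj1_sig d) x, u ∘ f = h.
Proof.
  case: hu => j [_ Tuj].
  exists (eps x ∘ (j ∘ (fmap T h ∘ gamma d))).
  rewrite comp_assoc coreflection_counit_natural -comp_assoc.
  by rewrite [fmap T u ∘ _]comp_assoc Tuj comp_id_l coreflection_factor.
Qed.

Lemma coreflection_local_cancel (f f' : Hom (proj1_sig d) x) :
  u ∘ f = u ∘ f' -> f = f'.
Proof.
  case: hu => j [jTu _] E.
  have ET : fmap T f = fmap T f'.
  { move: (f_equal (fun v => j ∘ fmap T v) E).
    by rewrite !fmap_comp !comp_assoc jTu !comp_id_l. }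
  by rewrite -(coreflection_factor f) -(coreflection_factor f') ET.
Qed.

End Colocal.

End Coreflection.

Section FullyFaithful.

Variables (C : Category) (PB PD : C -> Prop).
Variable S : Functor C (FullSub PB).
Variable alpha : NatTrans (IdFunctor C) (CompFunctor (Incl PB) S).
Variable beta : NatTrans (CompFunctor S (Incl PB)) (IdFunctor (FullSub PB)).
Variable T : Functor C (FullSub PD).
Variable gamma : NatTrans (IdFunctor (FullSub PD)) (CompFunctor T (Incl PD)).
Variable eps : NatTrans (CompFunctor (Incl PD) T) (IdFunctor C).
Hypothesis adjSI : Adjunction S (Incl PB) alpha beta.
Hypothesis adjJT : Adjunction (Incl PD) T gamma eps.

Section JTI.

Hypothesis hISeps : forall x : C, is_iso (fmap (Incl PB) (fmap S (eps x))).

Lemma JTI_full : full (CompFunctor (CompFunctor (Incl PD) T) (Incl PB)).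
Proof.
  move=> a b g.
  have [f Ef] :=
    reflection_local_extend adjSI (hISeps (proj1_sig a)) (comp (eps _) g).
  exists f; apply: (coreflection_counit_mono adjJT).
  by rewrite -coreflection_counit_natural.
Qed.

Lemma JTI_faithful : faithful (CompFunctor (CompFunctor (Incl PD) T) (Incl PB)).
Proof.
  move=> a b f f' E.
  apply: (reflection_local_cancel adjSI (hISeps (proj1_sig a))).
  by rewrite !coreflection_counit_natural; cbn in E |- *; rewrite E.
Qed.

End JTI.

Section ISJ.

Hypothesis hJTalpha : forall x : C, is_iso (fmap (Incl PD) (fmap T (alpha x))).

Lemma ISJ_full : full (CompFunctor (CompFunctor (Incl PB) S) (Incl PD)).
Proof.
  move=> a b g.
  have [f Ef] :=
    coreflection_local_lift adjJT (hJTalpha (proj1_sig b)) (d:=a) (comp g (alpha _)).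
  exists f; apply: (reflection_unit_epi adjSI).
  by rewrite reflection_unit_natural.
Qed.

Lemma ISJ_faithful : faithful (CompFunctor (CompFunctor (Incl PB) S) (Incl PD)).
Proof.
  move=> a b f f' E.
  apply: (coreflection_local_cancel adjJT (hJTalpha (proj1_sig b))).
  by rewrite -!reflection_unit_natural; cbn in E |- *; rewrite E.
Qed.

End ISJ.

End FullyFaithful.

Theorem propositionA5 (C : Category) (PB PD : C -> Prop)
  (S : Functor C (FullSub PB))
  (alpha : NatTrans (IdFunctor C) (CompFunctor (Incl PB) S))
  (beta : NatTrans (CompFunctor S (Incl PB)) (IdFunctor (FullSub PB)))
  (T : Functor C (FullSub PD))
  (gamma : NatTrans (IdFunctor (FullSub PD)) (CompFunctor T (Incl PD)))
  (eps : NatTrans (CompFunctor (Incl PD) T) (IdFunctor C))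
  (adjSI : Adjunction S (Incl PB) alpha beta)
  (adjJT : Adjunction (Incl PD) T gamma eps)
  (hISeps : forall x : C, is_iso (fmap (Incl PB) (fmap S (eps x))))
  (hJTalpha : forall x : C, is_iso (fmap (Incl PD) (fmap T (alpha x)))) :
  (full (CompFunctor (CompFunctor (Incl PD) T) (Incl PB)) /\
   faithful (CompFunctor (CompFunctor (Incl PD) T) (Incl PB))) /\
  (full (CompFunctor (CompFunctor (Incl PB) S) (Incl PD)) /\
   faithful (CompFunctor (CompFunctor (Incl PB) S) (Incl PD))).
Proof.
  split; split.
  - exact: JTI_full adjSI adjJT hISeps.
  - exact: JTI_faithful adjSI hISeps.
  - exact: ISJ_full adjSI adjJT hJTalpha.
  - exact: ISJ_faithful adjJT hJTalpha.
Qed.
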